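(* Let $e_X:P\to X$ be a meet-extension with $X$ a complete lattice, let $Q$ be a complete lattice, and let $f:P\to Q$ be an order-preserving map. Then $f$ is an $X$-morphism if and only if $f$ is $e_X$-continuous.
   Context: For $q$ in a poset, $q^\uparrow=\{q'\ge q\}$; for $S\subseteq P$, $S^\uparrow=\{p\in P:p\ge s\text{ for some }s\in S\}$; $e^{-1}(Z)=\{p:e(p)\in Z\}$. A meet-extension is an order-embedding $e:P\to X$ with $x=\bigwedge e[e^{-1}(x^\uparrow)]$ for all $x\in X$. An order-preserving $f:P\to Q$ is an $X$-morphism if for every $q\in Q$ there is $x\in X$ with $f^{-1}(q^\uparrow)=e_X^{-1}(x^\uparrow)$. For a cardinal $\alpha$, $f$ is $(\alpha,e_X)$-continuous if for all $q\in Q$ and all $S\subseteq f^{-1}(q^\uparrow)$ with $|S|<\alpha$ there are $q_S\in Q$ and $x_S\in X$ with (1) $\bigwedge f[S]=q_S=\bigwedge f[e_X^{-1}(x_S^\uparrow)]$ (both meets existing in $Q$) and (2) $S^\uparrow\subseteq e_X^{-1}(x_S^\uparrow)$. $f$ is $e_X$-continuous if it is $(\alpha,e_X)$-continuous for every cardinal $\alpha$. *)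

From mathcomp Require Import all_boot all_order.
Set Implicit Arguments. Unset Strict Implicit. Unset Printing Implicit Defensive.
Import Order.Theory.
Local Open Scope order_scope.

Definition is_glb {d} {T : porderType d} (S : T -> Prop) (m : T) : Prop :=
  (forall s, S s -> m <= s) /\ (forall l, (forall s, S s -> l <= s) -> l <= m).

Definition complete_lattice {d} (T : porderType d) : Prop :=
  forall S : T -> Prop, exists m, is_glb S m.

Definition order_preserving {d1 d2} {A : porderType d1} {B : porderType d2}
  (f : A -> B) : Prop := forall x y, x <= y -> f x <= f y.

Definition order_embedding {d1 d2} {A : porderType d1} {B : porderType d2}
  (f : A -> B) : Prop := forall x y, (f x <= f y) <-> (x <= y).

Definition image_of {A B : Type} (f : A -> B) (S : A -> Prop) : B -> Prop :=
  fun b => exists a, S a /\ b = f a.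

Definition upset {d} {T : porderType d} (q : T) : T -> Prop := fun y => q <= y.

Definition upclosure {d} {T : porderType d} (S : T -> Prop) : T -> Prop :=
  fun p => exists s, S s /\ s <= p.

Definition preimage {A B : Type} (e : A -> B) (Z : B -> Prop) : A -> Prop :=
  fun p => Z (e p).

Definition meet_extension {d1 d2} {P : porderType d1} {X : porderType d2}
  (e : P -> X) : Prop :=
  order_embedding e /\
  forall x : X, is_glb (image_of e (preimage e (upset x))) x.

Definition X_morphism {d1 d2 d3} {P : porderType d1} {X : porderType d2}
  {Q : porderType d3} (e : P -> X) (f : P -> Q) : Prop :=
  forall q : Q, exists x : X,
    forall p, preimage f (upset q) p <-> preimage e (upset x) p.

(* |S| < alpha, with the cardinal alpha represented by (the cardinality of)
   a type A: S injects into A but A does not inject into S. *)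
Definition card_lt {T : Type} (S : T -> Prop) (A : Type) : Prop :=
  (exists g : {t : T | S t} -> A, injective g) /\
  ~ (exists h : A -> {t : T | S t}, injective h).

Definition alpha_continuous {d1 d2 d3} (A : Type) {P : porderType d1}
  {X : porderType d2} {Q : porderType d3} (e : P -> X) (f : P -> Q) : Prop :=
  forall (q : Q) (S : P -> Prop),
    (forall s, S s -> preimage f (upset q) s) ->
    card_lt S A ->
    exists (qS : Q) (xS : X),
      is_glb (image_of f S) qS /\
      is_glb (image_of f (preimage e (upset xS))) qS /\
      (forall p, upclosure S p -> preimage e (upset xS) p).

Definition e_continuous {d1 d2 d3} {P : porderType d1}
  {X : porderType d2} {Q : porderType d3} (e : P -> X) (f : P -> Q) : Prop :=
  forall A : Type, alpha_continuous A e f.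

From mathcomp Require Import all_boot all_order.
Import Order.Theory.
Local Open Scope order_scope.

(* For (=>), given S put q_S := /\ f[S] and let x_S represent f^{-1}(q_S^up).
   Monotonicity of f gives S^up <= f^{-1}(q_S^up) = e^{-1}(x_S^up), and the
   image of that set has meet q_S: it contains f[S] and lies above q_S.
   For (<=), apply continuity to S := f^{-1}(q^up) at a cardinal above |S|
   (Cantor).  Then q <= /\ f[S] = q_S, whence
   e^{-1}(x_S^up) <= f^{-1}(q^up) = S <= e^{-1}(x_S^up). *)

Lemma card_lt_powerset {T : Type} (S : T -> Prop) :
  card_lt S ({t : T | S t} -> Prop).
Proof.
split.
- exists (fun s t => t = s) => s s' eq_ss'.
  by have /= <- := f_equal (fun g => g s) eq_ss'.
- move=> [h h_inj].
  pose D Y := exists Z, h Z = Y /\ ~ Z Y.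
  have notD : ~ D (h D).
    by move=> DhD; case: (DhD) => Z [/h_inj eqZD notZ]; subst Z.
  by apply: (notD); exists D.
Qed.

Lemma image_of_sub {A B : Type} (f : A -> B) (S T : A -> Prop) :
  (forall a, S a -> T a) -> forall b, image_of f S b -> image_of f T b.
Proof. by move=> ST b [a [Sa ->]]; exists a; split; first exact: ST. Qed.

Lemma is_glb_superset {d} {T : porderType d} (A B : T -> Prop) (m : T) :
  is_glb A m -> (forall t, A t -> B t) -> (forall t, B t -> m <= t) ->
  is_glb B m.
Proof. by move=> [_ glbA] AB lbB; split=> // l lbl; apply: glbA => t /AB /lbl. Qed.

Section Continuity.
Context {d1 d2 d3 : Order.disp_t} {P : porderType d1} {X : porderType d2}
  {Q : porderType d3}.
Variables (e : P -> X) (f : P -> Q).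

Lemma upclosure_preimage_glb {S : P -> Prop} {m : Q} :
  order_preserving f -> is_glb (image_of f S) m ->
  forall p, upclosure S p -> preimage f (upset m) p.
Proof.
move=> f_mono [lbS _] p [s [Ss le_sp]].
by apply: le_trans (f_mono _ _ le_sp); apply: lbS; exists s.
Qed.

Lemma X_morphism_e_continuous :
  complete_lattice Q -> order_preserving f -> X_morphism e f -> e_continuous e f.
Proof.
move=> cQ f_mono Xmor A q S _ _.
have [m glbS] := cQ (image_of f S).
have [x fe_eq] := Xmor m.
have upS_sub : forall p, upclosure S p -> preimage e (upset x) p.
  by move=> p /(upclosure_preimage_glb f_mono glbS) /fe_eq.
exists m, x; split=> //; split=> //.
apply: is_glb_superset glbS _ _.
- by apply: image_of_sub => s Ss; apply: upS_sub; exists s.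
- by move=> _ [p [/fe_eq fp ->]].
Qed.

Lemma e_continuous_X_morphism : e_continuous e f -> X_morphism e f.
Proof.
move=> cont q.
have [m [x [[_ glbS] [[lbx _] upS_sub]]]] :=
  cont _ q (preimage f (upset q)) (fun _ fs => fs) (card_lt_powerset _).
have le_qm : q <= m by apply: glbS => _ [p [fp ->]].
exists x => p; split=> [fp | ep].
- by apply: upS_sub; exists p.
- by apply: le_trans le_qm (lbx _ _); exists p.
Qed.

End Continuity.

Theorem proposition7p2 (d1 d2 d3 : Order.disp_t)
  (P : porderType d1) (X : porderType d2) (Q : porderType d3)
  (e : P -> X) (f : P -> Q) :
  meet_extension e -> complete_lattice X ->
  complete_lattice Q -> order_preserving f ->
  (X_morphism e f <-> e_continuous e f).
Proof.
move=> _ _ cQ f_mono; split.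
- exact: X_morphism_e_continuous.
- exact: e_continuous_X_morphism.
Qed.
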